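(* Assume the composite setting below with (G2). Let $(u_k,\Delta_k)\subset\mathbb{R}^n\times(0,\infty)$ with $u_k\to u$, $\Delta_k\to0$ and $\psi(u_k,\Delta_k)\to0$. Then $0\in\partial f(u)$.
   Context: Composite setting: $J:\mathbb{R}^m\times\mathbb{R}^n\to\mathbb{R}$ continuously differentiable; $S:\mathbb{R}^n\to\mathbb{R}^m$ locally Lipschitz continuous and directionally differentiable (directional derivative $S'(u;h)$); $f(u):=J(S(u),u)$. $\partial_B S(u)$ is the Bouligand subdifferential: all limits $\lim_j S'(u_j)$ with $u_j\to u$ and $S$ differentiable at $u_j$. $\partial f(u)$ is the Clarke subdifferential of $f$. $B_r(x)$ is the closed Euclidean ball. For each $u\in\mathbb{R}^n$, $\Delta>0$ let $\mathcal G(u,\Delta)\subset\mathbb{R}^{m\times n}$ be a nonempty bounded set, and define the model $\phi(u,\Delta;d):=\sup_{G\in\mathcal G(u,\Delta)}\langle G^\top\nabla_yJ(S(u),u)+\nabla_uJ(S(u),u),d\rangle$ and $\psi(u,\Delta):=-\inf_{\|h\|\le1}\phi(u,\Delta;h)$. Conditions: (G1) $\bigcup_{\xi\in B_\Delta(u)}\partial_BS(\xi)\subseteq\mathcal G(u,\Delta)$ for all $u$, $\Delta>0$; (G2) if $(u_k,\Delta_k)\to(u,0)$ with $0\notin\partial f(u)$, then $\sup_{G\in\mathcal G(u_k,\Delta_k)}\inf_{W\in\partial_BS(u)}\|G-W\|\to0$; (D) for all $u,h\in\mathbb{R}^n$ there is $G\in\partial_BS(u)$ with $S'(u;h)=Gh$.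 *)

From Stdlib Require Import Reals Classical ClassicalEpsilon.
From mathcomp Require Import ssreflect ssrfun ssrbool eqtype ssrnat seq fintype bigop.

Open Scope R_scope.

Definition Vec (n : nat) := 'I_n -> R.
Definition Mat (m n : nat) := 'I_m -> 'I_n -> R.

Definition vadd {n} (x y : Vec n) : Vec n := fun i => x i + y i.
Definition vsub {n} (x y : Vec n) : Vec n := fun i => x i - y i.
Definition vscale {n} (a : R) (x : Vec n) : Vec n := fun i => a * x i.
Definition dot {n} (x y : Vec n) : R := \big[Rplus/0]_(i < n) (x i * y i).
Definition vnorm {n} (x : Vec n) : R := sqrt (dot x x).
Definition mulmv {m n} (A : Mat m n) (h : Vec n) : Vec m :=
  fun i => \big[Rplus/0]_(j < n) (A i j * h j).
Definition mulmtv {m n} (A : Mat m n) (y : Vec m) : Vec n :=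
  fun j => \big[Rplus/0]_(i < m) (A i j * y i).
Definition msub {m n} (A B : Mat m n) : Mat m n := fun i j => A i j - B i j.
(* Frobenius norm (all norms on R^{m x n} are equivalent) *)
Definition mnorm {m n} (A : Mat m n) : R :=
  sqrt (\big[Rplus/0]_(i < m) \big[Rplus/0]_(j < n) (A i j * A i j)).

Definition vconv {n} (x : nat -> Vec n) (x0 : Vec n) : Prop :=
  forall eps, 0 < eps -> exists N, forall k, le N k -> vnorm (vsub (x k) x0) < eps.
Definition mconv {m n} (A : nat -> Mat m n) (A0 : Mat m n) : Prop :=
  forall eps, 0 < eps -> exists N, forall k, le N k -> mnorm (msub (A k) A0) < eps.

(* supremum / infimum of a set of reals (value 0 if no least upper bound exists;
   in all uses below the sets are nonempty and bounded) *)
Definition Rsup (E : R -> Prop) : R :=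
  match excluded_middle_informative (exists l, is_lub E l) with
  | left H => proj1_sig (constructive_indefinite_description _ H)
  | right _ => 0
  end.
Definition Rinf (E : R -> Prop) : R := - Rsup (fun x => E (- x)).

Definition J_has_grad {m n} (J : Vec m -> Vec n -> R) (y : Vec m) (u : Vec n)
  (gy : Vec m) (gu : Vec n) : Prop :=
  forall eps, 0 < eps -> exists delta, 0 < delta /\
    forall (p : Vec m) (q : Vec n),
      sqrt (dot p p + dot q q) < delta ->
      Rabs (J (vadd y p) (vadd u q) - J y u - dot gy p - dot gu q)
        <= eps * sqrt (dot p p + dot q q).

Definition cont2 {m n k} (F : Vec m -> Vec n -> Vec k) : Prop :=
  forall y u eps, 0 < eps -> exists delta, 0 < delta /\
    forall y' u', sqrt (dot (vsub y' y) (vsub y' y) + dot (vsub u' u) (vsub u' u)) < delta ->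
      vnorm (vsub (F y' u') (F y u)) < eps.

Definition C1_with_grad {m n} (J : Vec m -> Vec n -> R)
  (Jy : Vec m -> Vec n -> Vec m) (Ju : Vec m -> Vec n -> Vec n) : Prop :=
  (forall y u, J_has_grad J y u (Jy y u) (Ju y u)) /\ cont2 Jy /\ cont2 Ju.

Definition loc_lipschitz {n m} (S : Vec n -> Vec m) : Prop :=
  forall u, exists r L, 0 < r /\ 0 <= L /\
    forall x y, vnorm (vsub x u) <= r -> vnorm (vsub y u) <= r ->
      vnorm (vsub (S x) (S y)) <= L * vnorm (vsub x y).

Definition dir_deriv {n m} (S : Vec n -> Vec m) (u h : Vec n) (d : Vec m) : Prop :=
  forall eps, 0 < eps -> exists delta, 0 < delta /\
    forall t, 0 < t < delta ->
      vnorm (vsub (vscale (/ t) (vsub (S (vadd u (vscale t h))) (S u))) d) < eps.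

Definition dir_differentiable {n m} (S : Vec n -> Vec m) : Prop :=
  forall u h, exists d, dir_deriv S u h d.

Definition frechet {n m} (S : Vec n -> Vec m) (x : Vec n) (A : Mat m n) : Prop :=
  forall eps, 0 < eps -> exists delta, 0 < delta /\
    forall h, vnorm h < delta ->
      vnorm (vsub (vsub (S (vadd x h)) (S x)) (mulmv A h)) <= eps * vnorm h.

Definition bouligand {n m} (S : Vec n -> Vec m) (u : Vec n) (W : Mat m n) : Prop :=
  exists (uj : nat -> Vec n) (Aj : nat -> Mat m n),
    (forall j, frechet S (uj j) (Aj j)) /\ vconv uj u /\ mconv Aj W.

(* Clarke subdifferential of f at u:
   g \in ∂f(u)  iff  <g,h> <= f°(u;h) := limsup_{y->u, t↓0} (f(y+th)-f(y))/t
   for all h; the limsup inequality is written out. *)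
Definition clarke {n} (f : Vec n -> R) (u g : Vec n) : Prop :=
  forall h eps delta, 0 < eps -> 0 < delta ->
    exists y t, vnorm (vsub y u) < delta /\ 0 < t < delta /\
      (f (vadd y (vscale t h)) - f y) / t > dot g h - eps.

Definition vzero {n} : Vec n := fun _ => 0.

Definition fcomp {m n} (J : Vec m -> Vec n -> R) (S : Vec n -> Vec m) : Vec n -> R :=
  fun u => J (S u) u.

Definition redgrad {m n} (Jy : Vec m -> Vec n -> Vec m) (Ju : Vec m -> Vec n -> Vec n)
  (S : Vec n -> Vec m) (u : Vec n) (G : Mat m n) : Vec n :=
  vadd (mulmtv G (Jy (S u) u)) (Ju (S u) u).

Definition phi {m n} (Jy : Vec m -> Vec n -> Vec m) (Ju : Vec m -> Vec n -> Vec n)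
  (S : Vec n -> Vec m) (Gs : Vec n -> R -> Mat m n -> Prop)
  (u : Vec n) (Delta : R) (d : Vec n) : R :=
  Rsup (fun v => exists G, Gs u Delta G /\ v = dot (redgrad Jy Ju S u G) d).

Definition psi {m n} (Jy : Vec m -> Vec n -> Vec m) (Ju : Vec m -> Vec n -> Vec n)
  (S : Vec n -> Vec m) (Gs : Vec n -> R -> Mat m n -> Prop)
  (u : Vec n) (Delta : R) : R :=
  - Rinf (fun v => exists h, vnorm h <= 1 /\ v = phi Jy Ju S Gs u Delta h).

Definition Gs_ok {m n} (Gs : Vec n -> R -> Mat m n -> Prop) : Prop :=
  forall u Delta, 0 < Delta ->
    (exists G, Gs u Delta G) /\ (exists B, forall G, Gs u Delta G -> mnorm G <= B).

(* condition (G2); sup_G inf_W ||G - W|| -> 0 written out *)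
Definition cond_G2 {m n} (J : Vec m -> Vec n -> R) (S : Vec n -> Vec m)
  (Gs : Vec n -> R -> Mat m n -> Prop) : Prop :=
  forall (u : Vec n) (uk : nat -> Vec n) (Dk : nat -> R),
    vconv uk u -> (forall k, 0 < Dk k) -> Un_cv Dk 0 ->
    ~ clarke (fcomp J S) u vzero ->
    forall eps, 0 < eps -> exists K, forall k, le K k ->
      forall G, Gs (uk k) (Dk k) G ->
        exists W, bouligand S u W /\ mnorm (msub G W) < eps.

(* Suppose 0 is not in the Clarke subdifferential of f at u. Then (G2) puts every element of
   G(u_k, D_k) close to the Bouligand subdifferential of S at u for large k. As psi(u_k, D_k) -> 0,
   for each direction h some G in G(u_k, D_k) makes <G^T grad_y J + grad_u J, h> almost
   nonnegative at u_k, and by continuity of the gradients of J so does a nearby Bouligand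
   Jacobian W at u. Where S is differentiable with Jacobian A, f is differentiable with gradient
   A^T grad_y J + grad_u J; letting such points tend to u shows that the Clarke derivative f°(u; h)
   is at least <W^T grad_y J + grad_u J, h>, hence nonnegative for every h. So 0 is in the Clarke
   subdifferential after all. *)

From HB Require Import structures.
From Stdlib Require Import Reals Lra Classical ClassicalEpsilon FunctionalExtensionality.
From mathcomp Require Import ssreflect ssrfun ssrbool eqtype ssrnat fintype bigop.
Open Scope R_scope.

HB.instance Definition _ :=
  Monoid.isComLaw.Build R 0 Rplus (fun x y z => esym (Rplus_assoc x y z)) Rplus_comm Rplus_0_l.

Section FiniteSums.
Context {n : nat}.
Implicit Types F G : 'I_n -> R.

Lemma sumR_ge0 F : (forall i, 0 <= F i) -> 0 <= \big[Rplus/0]_(i < n) F i.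
Proof. by move=> H; apply: (big_ind (fun x => 0 <= x)) => //; [lra | move=> *; lra]. Qed.

Lemma abs_sumR_le F : Rabs (\big[Rplus/0]_(i < n) F i) <= \big[Rplus/0]_(i < n) Rabs (F i).
Proof.
apply: (big_ind2 (fun x y => Rabs x <= y)) => //; first by rewrite Rabs_R0; lra.
- by move=> x1 x2 y1 y2 H1 H2; have := Rabs_triang x1 y1; lra.
- by move=> i; lra.
Qed.

Lemma sumR_lin a b F G : \big[Rplus/0]_(i < n) (a * F i + b * G i) =
  a * \big[Rplus/0]_(i < n) F i + b * \big[Rplus/0]_(i < n) G i.
Proof.
apply: (big_ind3 (fun x y z => x = a * y + b * z)) => //; first ring.
by move=> x1 x2 x3 y1 y2 y3 -> ->; ring.
Qed.

Lemma sumR_sub F G : \big[Rplus/0]_(i < n) F i - \big[Rplus/0]_(i < n) G i =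
  \big[Rplus/0]_(i < n) (F i - G i).
Proof.
transitivity (\big[Rplus/0]_(i < n) (1 * F i + -1 * G i)); first by rewrite sumR_lin; ring.
by apply: eq_bigr => i _; ring.
Qed.

Lemma sumR_scale a F : a * \big[Rplus/0]_(i < n) F i = \big[Rplus/0]_(i < n) (a * F i).
Proof.
apply: (big_ind2 (fun x y => a * x = y)) => //; first ring.
by move=> x1 x2 y1 y2 <- <-; ring.
Qed.

Lemma term_le_sumR F i : (forall j, 0 <= F j) -> F i <= \big[Rplus/0]_(j < n) F j.
Proof.
move=> H; rewrite (bigD1 i) //= -{1}(Rplus_0_r (F i)); apply: Rplus_le_compat_l.
by apply: (big_ind (fun x => 0 <= x)) => //; [lra | move=> *; lra].
Qed.

Lemma sumR_delta (p : 'I_n) c : \big[Rplus/0]_(j < n) (if j == p then c else 0) = c.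
Proof. by rewrite (bigD1 p) //= eqxx big1 => [|j /negbTE ->]; ring. Qed.

End FiniteSums.

Lemma sumR_le_const n (F : 'I_n -> R) c : (forall i, F i <= c) -> \big[Rplus/0]_(i < n) F i <= INR n * c.
Proof.
elim: n F => [|k IH] F H; first by rewrite big_ord0 /=; lra.
rewrite big_ord_recr S_INR /= Rmult_plus_distr_r Rmult_1_l.
apply: Rplus_le_compat; last exact: H.
exact: (IH (fun i => F (widen_ord (leqnSn k) i)) (fun i => H _)).
Qed.

Lemma sumR_sq_le_sq_l1 n (F : 'I_n -> R) :
  \big[Rplus/0]_(i < n) (F i * F i) <=
  \big[Rplus/0]_(i < n) Rabs (F i) * \big[Rplus/0]_(i < n) Rabs (F i).
Proof.
elim: n F => [|k IH] F; first by rewrite !big_ord0; lra.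
rewrite !big_ord_recr /=.
have IHk := IH (fun i => F (widen_ord (leqnSn k) i)).
have Ha : 0 <= \big[Rplus/0]_(i < k) Rabs (F (widen_ord (leqnSn k) i)).
  by apply: sumR_ge0 => i; apply: Rabs_pos.
move: IHk Ha; set a := \big[Rplus/0]_(i < k) Rabs _; set b := \big[Rplus/0]_(i < k) (_ * _).
have := Rabs_pos (F ord_max).
have -> : F ord_max * F ord_max = Rabs (F ord_max) * Rabs (F ord_max).
  by rewrite -Rabs_mult Rabs_right //; apply: Rle_ge; apply: Rle_0_sqr.
nra.
Qed.

Lemma dot_ge0 {n} (x : Vec n) : 0 <= dot x x.
Proof. by apply: sumR_ge0 => i; apply: Rle_0_sqr. Qed.

Lemma vnorm_ge0 {n} (x : Vec n) : 0 <= vnorm x.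
Proof. exact: sqrt_pos. Qed.

Lemma abs_coord_le_vnorm {n} (x : Vec n) i : Rabs (x i) <= vnorm x.
Proof.
rewrite /vnorm -sqrt_Rsqr_abs; apply: sqrt_le_1_alt.
exact: (term_le_sumR (fun j => x j * x j) i (fun j => Rle_0_sqr (x j))).
Qed.

Lemma abs_entry_le_mnorm {m n} (A : Mat m n) i j : Rabs (A i j) <= mnorm A.
Proof.
rewrite /mnorm -sqrt_Rsqr_abs; apply: sqrt_le_1_alt.
apply: Rle_trans (term_le_sumR (fun j => A i j * A i j) j (fun j => Rle_0_sqr _)) _.
apply: (term_le_sumR (fun i => \big[Rplus/0]_(j < n) (A i j * A i j)) i) => k.
by apply: sumR_ge0 => l; apply: Rle_0_sqr.
Qed.

Lemma vnorm_le_l1 {n} (x : Vec n) : vnorm x <= \big[Rplus/0]_(i < n) Rabs (x i).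
Proof.
have H0 : 0 <= \big[Rplus/0]_(i < n) Rabs (x i) by apply: sumR_ge0 => i; apply: Rabs_pos.
rewrite /vnorm -(sqrt_square _ H0); apply: sqrt_le_1_alt; exact: sumR_sq_le_sq_l1.
Qed.

(* A dimension-dependent substitute for the triangle inequality, which suffices here. *)
Lemma vnorm_le_coordwise {n} (x y z : Vec n) :
  (forall i, Rabs (x i) <= Rabs (y i) + Rabs (z i)) -> vnorm x <= INR n * (vnorm y + vnorm z).
Proof.
move=> H; apply: Rle_trans (vnorm_le_l1 x) _; apply: sumR_le_const => i.
by have := H i; have := abs_coord_le_vnorm y i; have := abs_coord_le_vnorm z i; lra.
Qed.

Lemma dot_scale_l {n} (x h : Vec n) t : dot (vscale t h) x = t * dot h x.
Proof. by rewrite /dot sumR_scale; apply: eq_bigr => i _; rewrite /vscale; ring. Qed.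

Lemma dot_scale_r {n} (x h : Vec n) t : dot x (vscale t h) = t * dot x h.
Proof. by rewrite /dot sumR_scale; apply: eq_bigr => i _; rewrite /vscale; ring. Qed.

Lemma vnorm_scale {n} (h : Vec n) t : 0 <= t -> vnorm (vscale t h) = t * vnorm h.
Proof.
move=> Ht; rewrite /vnorm dot_scale_l dot_scale_r -Rmult_assoc sqrt_mult.
- by rewrite sqrt_square.
- nra.
- exact: dot_ge0.
Qed.

Lemma dot_vadd_l {n} (x y h : Vec n) : dot (vadd x y) h = dot x h + dot y h.
Proof.
rewrite /dot -(Rmult_1_l (\big[Rplus/0]_(i < n) (x i * h i))).
rewrite -(Rmult_1_l (\big[Rplus/0]_(i < n) (y i * h i))) -sumR_lin.
by apply: eq_bigr => i _; rewrite /vadd; ring.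
Qed.

Lemma dot_vsub_r {n} (g p q : Vec n) : dot g (vsub p q) = dot g p - dot g q.
Proof. by rewrite /dot sumR_sub; apply: eq_bigr => i _; rewrite /vsub; ring. Qed.

Lemma dot_vzero_l {n} (h : Vec n) : dot vzero h = 0.
Proof. by rewrite /dot big1 // => i _; rewrite /vzero; ring. Qed.

Lemma dot_mulmv {m n} (g : Vec m) (A : Mat m n) (q : Vec n) :
  dot g (mulmv A q) = dot (mulmtv A g) q.
Proof.
rewrite /dot /mulmv /mulmtv.
under eq_bigr => i _ do rewrite sumR_scale.
rewrite exchange_big /=; apply: eq_bigr => j _.
by rewrite Rmult_comm sumR_scale; apply: eq_bigr => i _; ring.
Qed.

Lemma abs_dot_le {n} (x y : Vec n) c : (forall i, Rabs (x i) <= c) ->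
  Rabs (dot x y) <= INR n * (c * vnorm y).
Proof.
move=> H; apply: Rle_trans (abs_sumR_le _) _; apply: sumR_le_const => i.
rewrite Rabs_mult; apply: Rmult_le_compat; try apply: Rabs_pos.
- exact: H.
- exact: abs_coord_le_vnorm.
Qed.

Lemma vsub_vadd {n} (x e : Vec n) : vsub (vadd x e) x = e.
Proof. by apply: functional_extensionality => i; rewrite /vsub /vadd; ring. Qed.

Lemma vnorm_vsubxx {n} (x : Vec n) : vnorm (vsub x x) = 0.
Proof.
rewrite /vnorm /dot big1 ?sqrt_0 // => i _; rewrite /vsub; ring.
Qed.

Lemma sqrt_add_le a b : 0 <= a -> 0 <= b -> sqrt (a + b) <= sqrt a + sqrt b.
Proof.
move=> Ha Hb; have Hsa := sqrt_pos a; have Hsb := sqrt_pos b.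
rewrite -(sqrt_square (sqrt a + sqrt b)); last lra.
apply: sqrt_le_1_alt.
have := sqrt_sqrt a Ha; have := sqrt_sqrt b Hb; nra.
Qed.

Lemma Rmult_lt_of_lt_div a b c : 0 < c -> a < b / c -> a * c < b.
Proof.
move=> Hc H; have := Rmult_lt_compat_r c _ _ Hc H.
by rewrite /Rdiv Rmult_assoc Rinv_l ?Rmult_1_r; lra.
Qed.

Lemma Rsup_is_lub (E : R -> Prop) : (exists x, E x) -> (exists B, forall x, E x -> x <= B) ->
  is_lub E (Rsup E).
Proof.
move=> [x Ex] [B HB]; rewrite /Rsup; case: excluded_middle_informative => [H | []].
- exact: proj2_sig (constructive_indefinite_description _ H).
- by have [l Hl] := completeness E (ex_intro _ B HB) (ex_intro _ x Ex); exists l.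
Qed.

Lemma is_lub_approx (E : R -> Prop) l x : is_lub E l -> x < l -> exists y, E y /\ x < y.
Proof.
move=> [_ Hl] Hx; apply: NNPP => Hn.
suff : l <= x by lra.
by apply: Hl => y Ey; apply: Rnot_lt_le => Hy; apply: Hn; exists y.
Qed.

(** * Bouligand Jacobians *)

Lemma abs_frechet_entry_le {m n} {S : Vec n -> Vec m} {x} {A : Mat m n} {rho L} :
  frechet S x A -> 0 < rho ->
  (forall e, vnorm e <= rho -> vnorm (vsub (S (vadd x e)) (S x)) <= L * vnorm e) ->
  forall i p, Rabs (A i p) <= L + 1.
Proof.
move=> HA Hrho HL i p.
have [de [Hde Hfr]] := HA 1 Rlt_0_1.
have Hmin := Rmin_pos de rho Hde Hrho.
have Hmin_l := Rmin_l de rho; have Hmin_r := Rmin_r de rho.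
set s := Rmin de rho / 2.
set e : Vec n := fun k => if k == p then s else 0.
have He : vnorm e = s.
  rewrite /vnorm /dot (eq_bigr (fun k => if k == p then s * s else 0)).
    by rewrite sumR_delta sqrt_square // /s; lra.
  by move=> k _; rewrite /e; case: (k == p); ring.
have HAe : mulmv A e i = A i p * s.
  rewrite /mulmv -(sumR_delta p (A i p * s)); apply: eq_bigr => k _; rewrite /e.
  by case: eqP => [->|_]; ring.
have Hdiff := Hfr e ltac:(rewrite He /s; lra).
have Hlip := HL e ltac:(rewrite He /s; lra).
rewrite He in Hdiff Hlip.
set d := vsub (S (vadd x e)) (S x) in Hdiff Hlip.
have Hdi := Rle_trans _ _ _ (abs_coord_le_vnorm d i) Hlip.
have Hri := Rle_trans _ _ _ (abs_coord_le_vnorm (vsub d (mulmv A e)) i) Hdiff.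
rewrite /vsub HAe in Hri.
have Hs : 0 < s by rewrite /s; lra.
apply: (Rmult_le_reg_r s) => //.
move: Hdi Hri; split_Rabs; nra.
Qed.

Lemma lipschitz_near {m n} {S : Vec n -> Vec m} {u r L x} :
  (forall a b, vnorm (vsub a u) <= r -> vnorm (vsub b u) <= r ->
     vnorm (vsub (S a) (S b)) <= L * vnorm (vsub a b)) -> 0 < r ->
  vnorm (vsub x u) <= r / (2 * (INR n + 1)) ->
  forall e, vnorm e <= r / (2 * (INR n + 1)) ->
  vnorm (vsub (S (vadd x e)) (S x)) <= L * vnorm e.
Proof.
move=> HL Hr Hx e He.
have HN := pos_INR n.
have Hq2 : r / (2 * (INR n + 1)) * (2 * (INR n + 1)) = r by field; lra.
have Hq : 0 <= r / (2 * (INR n + 1)) by apply: Rlt_le; apply: Rdiv_lt_0_compat; lra.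
have Hxr : vnorm (vsub x u) <= r by nra.
have Hxe : vnorm (vsub (vadd x e) u) <= r.
  apply: Rle_trans (vnorm_le_coordwise _ (vsub x u) e _) _.
    move=> i; rewrite /vsub /vadd (_ : x i + e i - u i = (x i - u i) + e i); last ring.
    exact: Rabs_triang.
  have := vnorm_ge0 (vsub x u); have := vnorm_ge0 e; nra.
by have := HL (vadd x e) x Hxe Hxr; rewrite vsub_vadd.
Qed.

(* Jacobians at points near [u] are bounded by the local Lipschitz constant, and the
   bound passes to their limits. *)
Lemma bouligand_entries_bounded {m n} (S : Vec n -> Vec m) u : loc_lipschitz S ->
  exists M, 0 <= M /\ forall W, bouligand S u W -> forall i j, Rabs (W i j) <= M.
Proof.
move=> Lip; have [r [L [Hr [HL HLip]]]] := Lip u.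
exists (L + 2); split; first lra.
move=> W [uj [Aj [Hfr [Hcv Hmc]]]] i p.
have Hq : 0 < r / (2 * (INR n + 1)) by have := pos_INR n; move=> ?; apply: Rdiv_lt_0_compat; lra.
have [K1 HK1] := Hcv _ Hq; have [K2 HK2] := Hmc 1 Rlt_0_1.
set j := Nat.max K1 K2.
have Hj := Rlt_le _ _ (HK1 j (Nat.le_max_l _ _)).
have HA := abs_frechet_entry_le (Hfr j) Hq (lipschitz_near HLip Hr Hj) i p.
have HAW := Rle_lt_trans _ _ _ (abs_entry_le_mnorm (msub (Aj j) W) i p) (HK2 j (Nat.le_max_r _ _)).
move: HA HAW; rewrite /msub; split_Rabs; lra.
Qed.

(** * First-order behaviour of the reduced functional *)

Lemma fcomp_first_order {m n} {J : Vec m -> Vec n -> R} {Jy : Vec m -> Vec n -> Vec m}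
  {Ju : Vec m -> Vec n -> Vec n} {S : Vec n -> Vec m} {y} {A : Mat m n} :
  J_has_grad J (S y) y (Jy (S y) y) (Ju (S y) y) -> frechet S y A -> loc_lipschitz S ->
  forall eps, 0 < eps -> exists delta, 0 < delta /\ forall q, vnorm q < delta ->
    Rabs (fcomp J S (vadd y q) - fcomp J S y - dot (redgrad Jy Ju S y A) q) <= eps * vnorm q.
Proof.
move=> HJ HS Lip eps Heps.
have [r [L [Hr [HL HLip]]]] := Lip y.
set gy := Jy (S y) y; set gu := Ju (S y) y.
have Hgy := vnorm_ge0 gy; have Hm := pos_INR m.
set c := L + 1; set k := INR m * vnorm gy + 1.
have [dJ [HdJ HJd]] := HJ (eps / (2 * c)) ltac:(apply: Rdiv_lt_0_compat; rewrite /c; lra).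
have [dS [HdS HSd]] := HS (eps / (2 * k)) ltac:(apply: Rdiv_lt_0_compat; rewrite /k; nra).
have HdJc : 0 < dJ / c by apply: Rdiv_lt_0_compat; rewrite /c; lra.
exists (Rmin r (Rmin dS (dJ / c))); split; first by repeat apply: Rmin_pos.
move=> q Hq.
have := Rmin_l r (Rmin dS (dJ / c)); have := Rmin_r r (Rmin dS (dJ / c)).
have := Rmin_l dS (dJ / c); have := Rmin_r dS (dJ / c); move=> H1 H2 H3 H4.
have Hq0 := vnorm_ge0 q.
set p := vsub (S (vadd y q)) (S y).
have Hp : vnorm p <= L * vnorm q.
  have := HLip (vadd y q) y; rewrite vsub_vadd vnorm_vsubxx; apply; lra.
have Hpq : sqrt (dot p p + dot q q) <= c * vnorm q.
  apply: Rle_trans (sqrt_add_le _ _ (dot_ge0 _) (dot_ge0 _)) _.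
  by rewrite -/(vnorm p) -/(vnorm q) /c; nra.
have HqJ : c * vnorm q < dJ.
  have -> : dJ = c * (dJ / c) by field; rewrite /c; lra.
  by apply: Rmult_lt_compat_l; [rewrite /c; lra | lra].
have HJexp := HJd p q ltac:(lra).
have Epq : vadd (S y) p = S (vadd y q).
  by apply: functional_extensionality => i; rewrite /p /vsub /vadd; ring.
rewrite Epq in HJexp.
have Hlin : Rabs (dot gy p - dot (mulmtv A gy) q) <= eps / 2 * vnorm q.
  rewrite -dot_mulmv -dot_vsub_r.
  apply: Rle_trans (abs_dot_le _ _ _ (abs_coord_le_vnorm gy)) _.
  have HSq : vnorm (vsub p (mulmv A q)) <= eps / (2 * k) * vnorm q by apply: HSd; lra.
  have -> : eps / 2 * vnorm q = k * (eps / (2 * k) * vnorm q) by field; rewrite /k; nra.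
  rewrite -Rmult_assoc; apply: Rmult_le_compat => //; last by rewrite /k; lra.
  - exact: Rmult_le_pos.
  - exact: vnorm_ge0.
have HJc : eps / (2 * c) * sqrt (dot p p + dot q q) <= eps / 2 * vnorm q.
  have -> : eps / 2 = eps / (2 * c) * c by field; rewrite /c; lra.
  rewrite Rmult_assoc; apply: Rmult_le_compat_l => //.
  by apply: Rlt_le; apply: Rdiv_lt_0_compat; rewrite /c; lra.
rewrite /fcomp /redgrad dot_vadd_l -/gy -/gu.
move: HJexp Hlin HJc; rewrite /gy /gu; split_Rabs; lra.
Qed.

Lemma dir_quotient_near {n} {f : Vec n -> R} {y g : Vec n} :
  (forall eps, 0 < eps -> exists delta, 0 < delta /\ forall q, vnorm q < delta ->
     Rabs (f (vadd y q) - f y - dot g q) <= eps * vnorm q) ->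
  forall h eps, 0 < eps -> exists T, 0 < T /\ forall t, 0 < t < T ->
    Rabs ((f (vadd y (vscale t h)) - f y) / t - dot g h) <= eps.
Proof.
move=> Hf h eps Heps.
have Hh := vnorm_ge0 h.
have [delta [Hd Hexp]] := Hf (eps / (vnorm h + 1)) ltac:(apply: Rdiv_lt_0_compat; lra).
exists (delta / (vnorm h + 1)); split; first by apply: Rdiv_lt_0_compat; lra.
move=> t [Ht0 HtT].
have Htd := Rmult_lt_of_lt_div t delta (vnorm h + 1) ltac:(lra) HtT.
have := Hexp (vscale t h); rewrite dot_scale_r vnorm_scale; last lra.
move/(_ ltac:(nra)).
have -> : eps / (vnorm h + 1) * (t * vnorm h) = t * eps - t * (eps / (vnorm h + 1)).
  by field; lra.
have := Rdiv_lt_0_compat eps (vnorm h + 1) Heps ltac:(lra).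
set X := f _ - f y => Hpos HX.
have -> : X / t - dot g h = / t * (X - t * dot g h) by field; lra.
rewrite Rabs_mult Rabs_inv Rabs_right; last lra.
apply: (Rmult_le_reg_l t) => //; rewrite -Rmult_assoc Rinv_r; last lra.
by rewrite Rmult_1_l; nra.
Qed.

Lemma abs_mulmtv_sub_le {m n} (G W : Mat m n) (a b : Vec m) M d j :
  0 <= M -> 0 <= d -> d <= 1 ->
  (forall i, Rabs (W i j) <= M) -> (forall i, Rabs (b i) <= M) ->
  (forall i, Rabs (G i j - W i j) <= d) -> (forall i, Rabs (a i - b i) <= d) ->
  Rabs (mulmtv G a j - mulmtv W b j) <= INR m * ((2 * M + 1) * d).
Proof.
move=> HM Hd Hd1 HW Hb HG Ha.
rewrite /mulmtv sumR_sub; apply: Rle_trans (abs_sumR_le _) _; apply: sumR_le_const => i.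
rewrite (_ : G i j * a i - W i j * b i = (G i j - W i j) * a i + W i j * (a i - b i)); last ring.
apply: Rle_trans (Rabs_triang _ _) _; rewrite !Rabs_mult.
have Hai : Rabs (a i) <= M + 1.
  by have := Ha i; have := Hb i; split_Rabs; lra.
have := HG i; have := HW i; have := Ha i; have := Rabs_pos (G i j - W i j).
have := Rabs_pos (W i j); have := Rabs_pos (a i - b i); nra.
Qed.

Lemma abs_dot_affine_sub_le {m n} (G W : Mat m n) (a b : Vec m) (c c' h : Vec n) M d :
  0 <= M -> 0 <= d -> d <= 1 ->
  (forall i j, Rabs (W i j) <= M) -> (forall i, Rabs (b i) <= M) -> (forall j, Rabs (h j) <= M) ->
  (forall i j, Rabs (G i j - W i j) <= d) -> (forall i, Rabs (a i - b i) <= d) ->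
  (forall j, Rabs (c j - c' j) <= d) ->
  Rabs (dot (vadd (mulmtv G a) c) h - dot (vadd (mulmtv W b) c') h)
    <= INR n * (M * (INR m * (2 * M + 1) + 1)) * d.
Proof.
move=> HM Hd Hd1 HW Hb Hh HG Ha Hc.
rewrite /dot sumR_sub; apply: Rle_trans (abs_sumR_le _) _.
apply: Rle_trans (sumR_le_const _ _ ((INR m * ((2 * M + 1) * d) + d) * M) _) _; last first.
  by apply: Req_le; ring.
move=> j; rewrite /vadd.
rewrite (_ : _ - _ = (mulmtv G a j - mulmtv W b j + (c j - c' j)) * h j); last ring.
rewrite Rabs_mult; apply: Rmult_le_compat; try apply: Rabs_pos; last exact: Hh.
apply: Rle_trans (Rabs_triang _ _) _; apply: Rplus_le_compat; last exact: Hc.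
exact: abs_mulmtv_sub_le.
Qed.

Lemma partial_grads_near {m n} (Jy : Vec m -> Vec n -> Vec m) (Ju : Vec m -> Vec n -> Vec n)
  (S : Vec n -> Vec m) u d :
  cont2 Jy -> cont2 Ju -> loc_lipschitz S -> 0 < d ->
  exists rho, 0 < rho /\ forall v, vnorm (vsub v u) < rho ->
    (forall i, Rabs (Jy (S v) v i - Jy (S u) u i) <= d) /\
    (forall j, Rabs (Ju (S v) v j - Ju (S u) u j) <= d).
Proof.
move=> Cy Cu Lip Hd.
have [d1 [Hd1 H1]] := Cy (S u) u d Hd.
have [d2 [Hd2 H2]] := Cu (S u) u d Hd.
have [r [L [Hr [HL HLip]]]] := Lip u.
have Hd12 := Rmin_pos d1 d2 Hd1 Hd2.
have Hrho : 0 < Rmin d1 d2 / (L + 1) by apply: Rdiv_lt_0_compat; lra.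
exists (Rmin r (Rmin d1 d2 / (L + 1))); split; first exact: Rmin_pos.
move=> v Hv.
have := Rmin_l r (Rmin d1 d2 / (L + 1)); have := Rmin_r r (Rmin d1 d2 / (L + 1)).
move=> Hmr Hml.
have HS := HLip v u ltac:(lra) ltac:(rewrite vnorm_vsubxx; lra).
have Hvu := Rmult_lt_of_lt_div _ _ (L + 1) ltac:(lra) (Rlt_le_trans _ _ _ Hv Hmr).
have Hjoint : sqrt (dot (vsub (S v) (S u)) (vsub (S v) (S u)) + dot (vsub v u) (vsub v u))
    < Rmin d1 d2.
  apply: Rle_lt_trans (sqrt_add_le _ _ (dot_ge0 _) (dot_ge0 _)) _.
  rewrite -/(vnorm (vsub (S v) (S u))) -/(vnorm (vsub v u)).
  have := vnorm_ge0 (vsub v u); nra.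
have := Rmin_l d1 d2; have := Rmin_r d1 d2; move=> Hm2 Hm1.
split=> [i | j]; apply: Rlt_le.
- apply: Rle_lt_trans (abs_coord_le_vnorm (vsub (Jy (S v) v) (Jy (S u) u)) i) _.
  by apply: H1; lra.
- apply: Rle_lt_trans (abs_coord_le_vnorm (vsub (Ju (S v) v) (Ju (S u) u)) j) _.
  by apply: H2; lra.
Qed.

Lemma dot_redgrad_near {m n} (Jy : Vec m -> Vec n -> Vec m) (Ju : Vec m -> Vec n -> Vec n)
  (S : Vec n -> Vec m) u (h : Vec n) MW eps :
  cont2 Jy -> cont2 Ju -> loc_lipschitz S -> 0 <= MW -> 0 < eps ->
  exists d rho, 0 < d /\ 0 < rho /\ forall v G W, vnorm (vsub v u) < rho ->
    (forall i j, Rabs (W i j) <= MW) -> mnorm (msub G W) < d ->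
    Rabs (dot (redgrad Jy Ju S v G) h - dot (redgrad Jy Ju S u W) h) < eps.
Proof.
move=> Cy Cu Lip HMW Heps.
have Hh := vnorm_ge0 h; have Hb := vnorm_ge0 (Jy (S u) u).
set M := MW + vnorm h + vnorm (Jy (S u) u) + 1.
set K := INR n * (M * (INR m * (2 * M + 1) + 1)).
have HK : 0 <= K.
  have := pos_INR m; have := pos_INR n; rewrite /K /M => Hn Hm.
  apply: Rmult_le_pos => //; apply: Rmult_le_pos; nra.
set d := Rmin 1 (eps / (K + 1)).
have Hepsd : 0 < eps / (K + 1) by apply: Rdiv_lt_0_compat; lra.
have Hd0 : 0 < d by apply: Rmin_pos; lra.
have Hd1 : d <= 1 := Rmin_l _ _.
have HKd : K * d < eps.
  have Hde : d * (K + 1) <= eps.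
    have := Rmin_r 1 (eps / (K + 1)); rewrite -/d.
    have : eps / (K + 1) * (K + 1) = eps by field; lra.
    nra.
  nra.
have [rho [Hrho Hgrads]] := partial_grads_near Jy Ju S u d Cy Cu Lip Hd0.
exists d, rho; do 2!split => //.
move=> v G W Hv HW HGW; have [Hy Hu] := Hgrads v Hv.
apply: Rle_lt_trans HKd.
apply: abs_dot_affine_sub_le; try lra.
- by rewrite /M; lra.
- by move=> i j; have := HW i j; rewrite /M; lra.
- by move=> i; have := abs_coord_le_vnorm (Jy (S u) u) i; rewrite /M; lra.
- by move=> j; have := abs_coord_le_vnorm h j; rewrite /M; lra.
- move=> i j; apply: Rlt_le; apply: Rle_lt_trans HGW.
  exact: (abs_entry_le_mnorm (msub G W) i j).
- exact: Hy.
- exact: Hu.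
Qed.

(** * The Clarke derivative dominates Bouligand directions *)

Lemma clarke_quotient_gt_bouligand {m n} (J : Vec m -> Vec n -> R)
  (Jy : Vec m -> Vec n -> Vec m) (Ju : Vec m -> Vec n -> Vec n) (S : Vec n -> Vec m)
  u h (W : Mat m n) eps delta :
  C1_with_grad J Jy Ju -> loc_lipschitz S -> bouligand S u W -> 0 < eps -> 0 < delta ->
  exists y t, vnorm (vsub y u) < delta /\ 0 < t < delta /\
    (fcomp J S (vadd y (vscale t h)) - fcomp J S y) / t > dot (redgrad Jy Ju S u W) h - eps.
Proof.
move=> [HJ [Cy Cu]] Lip HW Heps Hdelta.
have [MW [HMW0 HMW]] := bouligand_entries_bounded S u Lip.
have [d [rho [Hd [Hrho Hnear]]]] :=
  dot_redgrad_near Jy Ju S u h MW (eps / 2) Cy Cu Lip HMW0 ltac:(lra).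
have [uj [Aj [Hfr [Hcv Hmc]]]] := HW.
have [K1 HK1] := Hcv _ (Rmin_pos _ _ Hdelta Hrho).
have [K2 HK2] := Hmc d Hd.
set j := Nat.max K1 K2.
have Hj := HK1 j (Nat.le_max_l _ _).
have := Rmin_l delta rho; have := Rmin_r delta rho; move=> Hmr Hml.
have [T [HT Hquot]] :=
  dir_quotient_near (fcomp_first_order (HJ _ _) (Hfr j) Lip) h (eps / 2) ltac:(lra).
have := Rmin_l T delta; have := Rmin_r T delta; have := Rmin_pos T delta HT Hdelta.
set t := Rmin T delta / 2; move=> Hpos HtT Htd.
exists (uj j), t; split; first lra.
split; first by rewrite /t; lra.
have Hq := Hquot t ltac:(rewrite /t; lra).
have Hg := Hnear (uj j) (Aj j) W ltac:(lra) (HMW W HW) (HK2 j (Nat.le_max_r _ _)).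
move: Hq Hg; split_Rabs; lra.
Qed.

(** * The stationarity measure *)

Section StationarityMeasure.
Context {m n : nat} (Jy : Vec m -> Vec n -> Vec m) (Ju : Vec m -> Vec n -> Vec n)
  (S : Vec n -> Vec m) (Gs : Vec n -> R -> Mat m n -> Prop).
Hypothesis HGs : Gs_ok Gs.

Lemma abs_redgrad_le v (G : Mat m n) B j : mnorm G <= B ->
  Rabs (redgrad Jy Ju S v G j) <= INR m * (B * vnorm (Jy (S v) v)) + vnorm (Ju (S v) v).
Proof.
move=> HB; rewrite /redgrad /vadd.
apply: Rle_trans (Rabs_triang _ _) _; apply: Rplus_le_compat; last exact: abs_coord_le_vnorm.
apply: Rle_trans (abs_sumR_le _) _; apply: sumR_le_const => i.
rewrite Rabs_mult; apply: Rmult_le_compat; try apply: Rabs_pos.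
- exact: Rle_trans (abs_entry_le_mnorm G i j) HB.
- exact: abs_coord_le_vnorm.
Qed.

Lemma phi_is_lub v Delta h : 0 < Delta ->
  is_lub (fun x => exists G, Gs v Delta G /\ x = dot (redgrad Jy Ju S v G) h)
    (phi Jy Ju S Gs v Delta h).
Proof.
move=> HDelta; have [[G0 HG0] [B HB]] := HGs v Delta HDelta.
apply: Rsup_is_lub; first by exists (dot (redgrad Jy Ju S v G0) h), G0.
exists (INR n * ((INR m * (B * vnorm (Jy (S v) v)) + vnorm (Ju (S v) v)) * vnorm h)).
move=> x [G [HG ->]].
have := abs_dot_le _ h _ (fun j => abs_redgrad_le v G B j (HB G HG)).
by have := Rle_abs (dot (redgrad Jy Ju S v G) h); lra.
Qed.

Lemma neg_psi_le_phi v Delta h : 0 < Delta -> vnorm h <= 1 ->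
  - psi Jy Ju S Gs v Delta <= phi Jy Ju S Gs v Delta h.
Proof.
move=> HDelta Hh; have [[G0 HG0] _] := HGs v Delta HDelta.
set g0 := redgrad Jy Ju S v G0.
have Hphi_ge h' : vnorm h' <= 1 -> - (INR n * vnorm g0) <= phi Jy Ju S Gs v Delta h'.
  move=> Hh'; have [Hub _] := phi_is_lub v Delta h' HDelta.
  apply: Rle_trans (Hub (dot g0 h') (ex_intro _ G0 (conj HG0 erefl))).
  have := abs_dot_le g0 h' _ (abs_coord_le_vnorm g0).
  have := Rle_abs (- dot g0 h'); rewrite Rabs_Ropp.
  have : INR n * (vnorm g0 * vnorm h') <= INR n * vnorm g0.
    by apply: Rmult_le_compat_l; [exact: pos_INR | have := vnorm_ge0 g0; nra].
  lra.
set F := fun x => exists h', vnorm h' <= 1 /\ - x = phi Jy Ju S Gs v Delta h'.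
have [HFub _] : is_lub F (Rsup F).
  apply: Rsup_is_lub.
    by exists (- phi Jy Ju S Gs v Delta h), h; rewrite Ropp_involutive.
  exists (INR n * vnorm g0) => x [h' [Hh' Hx]].
  by have := Hphi_ge h' Hh'; lra.
have Hpsi : psi Jy Ju S Gs v Delta = Rsup F by rewrite /psi /Rinf Ropp_involutive.
have := HFub (- phi Jy Ju S Gs v Delta h).
by rewrite Hpsi => /(_ (ex_intro _ h (conj Hh (Ropp_involutive _)))); lra.
Qed.

Lemma psi_witness v Delta h eta : 0 < Delta -> 0 < eta -> vnorm h <= 1 ->
  exists G, Gs v Delta G /\ - psi Jy Ju S Gs v Delta - eta < dot (redgrad Jy Ju S v G) h.
Proof.
move=> HDelta Heta Hh.
have := neg_psi_le_phi v Delta h HDelta Hh.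
have [x [[G [HG ->]] Hx]] :=
  is_lub_approx _ _ (phi Jy Ju S Gs v Delta h - eta) (phi_is_lub v Delta h HDelta) ltac:(lra).
by exists G; split => //; lra.
Qed.

End StationarityMeasure.

Lemma psi_limit_bouligand_dir {m n} (J : Vec m -> Vec n -> R)
  (Jy : Vec m -> Vec n -> Vec m) (Ju : Vec m -> Vec n -> Vec n)
  (S : Vec n -> Vec m) (Gs : Vec n -> R -> Mat m n -> Prop)
  (HJ : C1_with_grad J Jy Ju) (HSlip : loc_lipschitz S)
  (HGs : Gs_ok Gs) (HG2 : cond_G2 J S Gs)
  (u : Vec n) (uk : nat -> Vec n) (Dk : nat -> R)
  (Hpos : forall k, 0 < Dk k) (Hu : vconv uk u) (HD : Un_cv Dk 0)
  (Hpsi : Un_cv (fun k => psi Jy Ju S Gs (uk k) (Dk k)) 0)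
  (Hnc : ~ clarke (fcomp J S) u vzero) (h : Vec n) tau :
  0 < tau -> exists W, bouligand S u W /\ - tau < dot (redgrad Jy Ju S u W) h.
Proof.
move=> Htau; have [_ [Cy Cu]] := HJ.
have [MW [HMW0 HMW]] := bouligand_entries_bounded S u HSlip.
have [d [rho [Hd [Hrho Hnear]]]] :=
  dot_redgrad_near Jy Ju S u h MW (tau / 2) Cy Cu HSlip HMW0 ltac:(lra).
have Hh := vnorm_ge0 h.
set c := vnorm h + 1; have Hc : 0 < c by rewrite /c; lra.
have Hh' : vnorm (vscale (/ c) h) <= 1.
  rewrite vnorm_scale; last by apply: Rlt_le; apply: Rinv_0_lt_compat.
  apply: (Rmult_le_reg_l c) => //; rewrite -Rmult_assoc Rinv_r; last lra.
  by rewrite /c; lra.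
have Hetac : 0 < tau / (4 * c) by apply: Rdiv_lt_0_compat; lra.
have [K1 HK1] := Hu rho Hrho.
have [K2 HK2] := HG2 u uk Dk Hu Hpos HD Hnc d Hd.
have [K3 HK3] := Hpsi _ Hetac.
set k := Nat.max K1 (Nat.max K2 K3).
have Hk1 : le K1 k by apply: Nat.le_max_l.
have Hk2 : le K2 k by apply: Nat.le_trans (Nat.le_max_l K2 K3) (Nat.le_max_r _ _).
have Hk3 : le K3 k by apply: Nat.le_trans (Nat.le_max_r K2 K3) (Nat.le_max_r _ _).
have Hpsik := HK3 k Hk3; rewrite /R_dist Rminus_0_r in Hpsik.
have [G [HG HGh]] := psi_witness Jy Ju S Gs HGs (uk k) (Dk k) _ _ (Hpos k) Hetac Hh'.
rewrite dot_scale_r in HGh.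
have HGh2 : - (tau / 2) < dot (redgrad Jy Ju S (uk k) G) h.
  have Hsc : - (tau / (2 * c)) < / c * dot (redgrad Jy Ju S (uk k) G) h.
    have : tau / (4 * c) + tau / (4 * c) = tau / (2 * c) by field; lra.
    by move: Hpsik; split_Rabs; lra.
  have := Rmult_lt_compat_l c _ _ Hc Hsc.
  have -> : c * - (tau / (2 * c)) = - (tau / 2) by field; lra.
  by rewrite -Rmult_assoc Rinv_r ?Rmult_1_l; lra.
have [W [HW HGW]] := HK2 k Hk2 G HG.
exists W; split => //.
have := Hnear (uk k) G W (HK1 k Hk1) (HMW W HW) HGW.
by split_Rabs; lra.
Qed.

Theorem lemma3p4 (m n : nat) (J : Vec m -> Vec n -> R)
  (Jy : Vec m -> Vec n -> Vec m) (Ju : Vec m -> Vec n -> Vec n)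
  (S : Vec n -> Vec m) (Gs : Vec n -> R -> Mat m n -> Prop)
  (HJ : C1_with_grad J Jy Ju)
  (HSlip : loc_lipschitz S) (HSdir : dir_differentiable S)
  (HGs : Gs_ok Gs) (HG2 : cond_G2 J S Gs)
  (u : Vec n) (uk : nat -> Vec n) (Dk : nat -> R)
  (Hpos : forall k, 0 < Dk k) (Hu : vconv uk u) (HD : Un_cv Dk 0)
  (Hpsi : Un_cv (fun k => psi Jy Ju S Gs (uk k) (Dk k)) 0) :
  clarke (fcomp J S) u vzero.
Proof.
case: (classic (clarke (fcomp J S) u vzero)) => // Hnc.
move=> h eps delta Heps Hdelta.
have [W [HW HWh]] := psi_limit_bouligand_dir J Jy Ju S Gs HJ HSlip HGs HG2 u uk Dk
  Hpos Hu HD Hpsi Hnc h (eps / 2) ltac:(lra).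
have [y [t [Hy [Ht Hq]]]] :=
  clarke_quotient_gt_bouligand J Jy Ju S u h W (eps / 2) delta HJ HSlip HW ltac:(lra) Hdelta.
exists y, t; split => //; split => //.
by rewrite dot_vzero_l; lra.
Qed.
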